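(* Let $f:\mathbb{R}^M\times\Theta\to\mathbb{R}^N$ (with $N\ge 1$) be a network whose first layer is linear, i.e. $f(\mathbf{x};\boldsymbol{\theta})=g(\mathbf{W}\mathbf{x};\bar{\boldsymbol{\theta}})$ with parameters $\boldsymbol{\theta}=(\mathbf{W},\bar{\boldsymbol{\theta}})$, $\mathbf{W}\in\mathbb{R}^{d\times M}$, and $g$ differentiable in its first argument and twice differentiable in the parameters. Let $(\mathbf{x}_i,\mathbf{y}_i)_{i=1}^n$ be training data with $\mathbf{x}_i\neq 0$, and let $\boldsymbol{\theta}^*$ be an exact interpolation solution, i.e. $f(\mathbf{x}_i;\boldsymbol{\theta}^* )=\mathbf{y}_i$ for all $i$, with first-layer weight $\mathbf{W}$. Then $$dV_{f(\boldsymbol{\theta}^* )}\le \frac{N^{-N/2}}{n}\sum_{i=1}^n\|J_f(\mathbf{x}_i)\|_F^N\le \frac{1}{n}\sqrt{\sum_{i=1}^n\frac{\|\mathbf{W}\|_2^{2N}}{\|\mathbf{x}_i\|_2^{2N}}}\left(\frac{n\,S(\boldsymbol{\theta}^* )}{N}\right)^{N/2}.$$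
   Context: The loss is the quadratic loss $L(\boldsymbol{\theta})=\frac1n\sum_{i=1}^n\frac12\|f(\mathbf{x}_i;\boldsymbol{\theta})-\mathbf{y}_i\|_2^2$, and the sharpness is $S(\boldsymbol{\theta})=\operatorname{Tr}(\nabla^2_{\boldsymbol{\theta}}L(\boldsymbol{\theta}))$. $J_f(\mathbf{x})\in\mathbb{R}^{N\times M}$ denotes the Jacobian of $\mathbf{x}\mapsto f(\mathbf{x};\boldsymbol{\theta}^* )$ at $\mathbf{x}$. The local volumetric ratio at $\mathbf{x}$ is $d\mathrm{vol}|_{f(\mathbf{x},\boldsymbol{\theta}^* )}=\sqrt{\det(J_f(\mathbf{x})J_f(\mathbf{x})^{T})}$ (the product of the singular values of $J_f(\mathbf{x})$), and the Local Volumetric Ratio (LVR) of the network is $dV_{f(\boldsymbol{\theta}^* )}=\frac1n\sum_{i=1}^n d\mathrm{vol}|_{f(\mathbf{x}_i,\boldsymbol{\theta}^* )}$. $\|\cdot\|_2$ is the Euclidean norm for vectors and spectral norm for matrices; $\|\cdot\|_F$ is the Frobenius norm. *)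

From HB Require Import structures.
From mathcomp Require Import all_boot all_order all_algebra.
From mathcomp Require Import all_classical all_reals all_analysis.
Set Implicit Arguments. Unset Strict Implicit. Unset Printing Implicit Defensive.
Import Order.TTheory GRing.Theory Num.Theory.
Import numFieldNormedType.Exports.
Local Open Scope classical_set_scope.
Local Open Scope ring_scope.

Section Defs.
Variable R : realType.

Definition p1_frob (m k : nat) (A : 'M[R]_(m, k)) : R :=
  Num.sqrt (\sum_(i < m) \sum_(j < k) A i j ^+ 2).

Definition p1_vnorm (k : nat) (v : 'cV[R]_k) : R := p1_frob v.

Definition p1_spec_norm (m k : nat) (A : 'M[R]_(m, k)) : R :=
  sup [set p1_vnorm (A *m v) | v in [set v : 'cV[R]_k | p1_vnorm v = 1]].

Definition p1_jacobian (M N : nat) (h : 'cV[R]_M -> 'cV[R]_N) (x : 'cV[R]_M)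
  : 'M[R]_(N, M) :=
  \matrix_(i < N, j < M) (derive h x (delta_mx j 0 : 'cV[R]_M)) i 0.

Definition p1_netf (M N d P : nat) (g : 'cV[R]_d -> 'cV[R]_P -> 'cV[R]_N)
  (x : 'cV[R]_M) (p : 'M[R]_(d, M) * 'cV[R]_P) : 'cV[R]_N :=
  g (p.1 *m x) p.2.

Definition p1_dvol (N M : nat) (J : 'M[R]_(N, M)) : R :=
  Num.sqrt (\det (J *m J^T)).

Definition p1_LVR (M N d P n : nat) (g : 'cV[R]_d -> 'cV[R]_P -> 'cV[R]_N)
  (W : 'M[R]_(d, M)) (thb : 'cV[R]_P) (xs : 'I_n -> 'cV[R]_M) : R :=
  n%:R^-1 * \sum_(i < n) p1_dvol (p1_jacobian (fun x => p1_netf g x (W, thb)) (xs i)).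

Definition p1_loss (M N d P n : nat) (g : 'cV[R]_d -> 'cV[R]_P -> 'cV[R]_N)
  (xs : 'I_n -> 'cV[R]_M) (ys : 'I_n -> 'cV[R]_N)
  (p : 'M[R]_(d, M) * 'cV[R]_P) : R :=
  n%:R^-1 * \sum_(i < n) 2^-1 * p1_vnorm (p1_netf g (xs i) p - ys i) ^+ 2.

Definition p1_d2 (V : normedModType R) (L : V -> R) (p e : V) : R :=
  derive (fun q => derive L q e) p e.

(* p1_sharpness: trace of the Hessian of the p1_loss in the standard coordinates
   of theta = (W, thb) *)
Definition p1_sharpness (M N d P n : nat) (g : 'cV[R]_d -> 'cV[R]_P -> 'cV[R]_N)
  (xs : 'I_n -> 'cV[R]_M) (ys : 'I_n -> 'cV[R]_N)
  (p : 'M[R]_(d, M) * 'cV[R]_P) : R :=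
  \sum_(i < d) \sum_(j < M) p1_d2 (p1_loss g xs ys) p (delta_mx i j, 0)
  + \sum_(k < P) p1_d2 (p1_loss g xs ys) p (0, delta_mx k 0).

End Defs.

(* Hadamard's inequality and AM-GM give det (J J^T) <= prod_i (J J^T)_ii
   <= (|J|_F^2 / N)^N, which is the first inequality.  Because the first layer
   is linear, J_f(x) = J_g(W x) W, hence |J_f(x)|_F <= |W|_2 |J_g(W x)|_F.  At
   an interpolating point the residuals vanish and the Hessian of the loss is
   its Gauss-Newton part; its diagonal entry for the weight W_ab is
   (1/n) sum_i x_ib^2 |column a of J_g(W x_i)|^2, so summing over a, b gives
   n S >= sum_i |x_i|^2 |J_g(W x_i)|_F^2.  Writing |J_f(x_i)|_F <= b_i c_i with
   b_i = |W|_2 / |x_i| and c_i = |x_i| |J_g(W x_i)|_F, Cauchy-Schwarz over the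
   samples and sum_i c_i^(2N) <= (sum_i c_i^2)^N give the second inequality. *)

From mathcomp Require Import all_boot all_order all_algebra.
From mathcomp Require Import all_classical all_reals all_analysis.
From mathcomp Require Import ring.
Import Order.TTheory GRing.Theory Num.Theory.
Import numFieldNormedType.Exports.

Set Implicit Arguments.
Unset Strict Implicit.
Unset Printing Implicit Defensive.

Local Open Scope ring_scope.

Section SumsOfSquares.
Variables (R : realFieldType) (I : finType).
Implicit Types x y : I -> R.

Lemma sum_sqr_ge0 x : 0 <= \sum_i x i ^+ 2.
Proof. by apply: sumr_ge0 => i _; rewrite sqr_ge0. Qed.

Lemma sum_sqr_eq0 y : \sum_i y i ^+ 2 = 0 -> forall i, y i = 0.
Proof.
move=> y0 i; apply/eqP; rewrite -sqrf_eq0; apply/eqP.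
by apply: (psumr_eq0P _ y0) => // j _; rewrite sqr_ge0.
Qed.

(* Pythagoras for the residual of the projection of x on y; it also holds for
   y = 0, where C / A = 0. *)
Lemma sum_sqr_residual x y
    (A := \sum_i y i ^+ 2) (C := \sum_i x i * y i) :
  \sum_i (x i - C / A * y i) ^+ 2 = (\sum_i x i ^+ 2) - C ^+ 2 / A.
Proof.
have [A0|A0] := eqVneq A 0.
  have y0 := sum_sqr_eq0 A0.
  by rewrite A0 !invr0 !mulr0 subr0; apply: eq_bigr => i _; rewrite mul0r subr0.
have -> : \sum_i (x i - C / A * y i) ^+ 2 =
    (\sum_i x i ^+ 2) - 2 * (C / A) * C + (C / A) ^+ 2 * A.
  rewrite /A /C !mulr_sumr -sumrN -!big_split /=.
  by apply: eq_bigr => i _; ring.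
by field.
Qed.

Lemma sum_sqr_residual_le x y
    (A := \sum_i y i ^+ 2) (C := \sum_i x i * y i) :
  \sum_i (x i - C / A * y i) ^+ 2 <= \sum_i x i ^+ 2.
Proof.
by rewrite sum_sqr_residual gerBl divr_ge0 ?sqr_ge0 ?sum_sqr_ge0.
Qed.

Lemma cauchy_schwarz_sum x y :
  (\sum_i x i * y i) ^+ 2 <= (\sum_i x i ^+ 2) * (\sum_i y i ^+ 2).
Proof.
have [A0|A0] := eqVneq (\sum_i y i ^+ 2) 0.
  have y0 := sum_sqr_eq0 A0.
  by rewrite A0 mulr0 big1 ?expr0n // => i _; rewrite y0 mulr0.
have Apos : 0 < \sum_i y i ^+ 2 by rewrite lt_def A0 sum_sqr_ge0.
have := sum_sqr_ge0 (fun i => x i - (\sum_j x j * y j) / (\sum_j y j ^+ 2) * y i).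
by rewrite sum_sqr_residual subr_ge0 ler_pdivrMr.
Qed.

Lemma sum_exprSn_le x k : (forall i, 0 <= x i) ->
  \sum_i x i ^+ k.+1 <= (\sum_i x i) ^+ k.+1.
Proof.
move=> x0; have S0 : 0 <= \sum_i x i by apply: sumr_ge0.
rewrite exprS mulr_suml; apply: ler_sum => i _; rewrite exprS ler_wpM2l //.
by rewrite lerXn2r ?nnegrE // (bigD1 i) //= lerDl sumr_ge0.
Qed.

End SumsOfSquares.

Section GramDeterminant.
Variable R : realFieldType.

Lemma gram_mxE m k (J : 'M[R]_(m, k)) i j :
  (J *m J^T) i j = \sum_l J i l * J j l.
Proof. by rewrite mxE; apply: eq_bigr => l _; rewrite mxE. Qed.

Lemma gram_diagE m k (J : 'M[R]_(m, k)) i :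
  (J *m J^T) i i = \sum_l J i l ^+ 2.
Proof. by rewrite gram_mxE; apply: eq_bigr => l _; rewrite expr2. Qed.

Lemma gram_diag_ge0 m k (J : 'M[R]_(m, k)) i : 0 <= (J *m J^T) i i.
Proof. by rewrite gram_diagE sum_sqr_ge0. Qed.

Lemma row'_col'_gram m k (J : 'M[R]_(m, k)) i0 :
  row' i0 (col' i0 (J *m J^T)) = row' i0 J *m (row' i0 J)^T.
Proof. by apply/matrixP => i j; rewrite !mxE; apply: eq_bigr => l _; rewrite !mxE. Qed.

Lemma det_first_row_diag n (A : 'M[R]_n.+1) :
  (forall j, j != ord0 -> A ord0 j = 0) ->
  \det A = A ord0 ord0 * \det (row' ord0 (col' ord0 A)).
Proof.
move=> A0; rewrite (expand_det_row _ ord0) (bigD1 ord0) //= big1 ?addr0.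
  by rewrite /cofactor expr0 mul1r.
by move=> j /A0 ->; rewrite mul0r.
Qed.

Section ProjectOutFirstRow.
Variables (m k : nat) (J : 'M[R]_(m.+1, k)).

(* One Gram-Schmidt step: every row but the first loses its component along
   the first row. *)
Definition proj_coef : 'cV[R]_m.+1 :=
  \col_i ((i != ord0)%:R * ((J *m J^T) i ord0 / (J *m J^T) ord0 ord0)).

Definition project_out_row0 : 'M[R]_(m.+1, k) := J - proj_coef *m row ord0 J.

Lemma proj_coef0 : proj_coef ord0 0 = 0.
Proof. by rewrite mxE eqxx mul0r. Qed.

Lemma proj_coefE i : i != ord0 ->
  proj_coef i 0 = (J *m J^T) i ord0 / (J *m J^T) ord0 ord0.
Proof. by move=> i0; rewrite mxE i0 mul1r. Qed.

Lemma project_out_row0E i l :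
  project_out_row0 i l = J i l - proj_coef i 0 * J ord0 l.
Proof. by rewrite !mxE big_ord1 !mxE. Qed.

Lemma project_out_row0_first l : project_out_row0 ord0 l = J ord0 l.
Proof. by rewrite project_out_row0E proj_coef0 mul0r subr0. Qed.

Lemma det_gram_project_out_row0 :
  \det (project_out_row0 *m project_out_row0^T) = \det (J *m J^T).
Proof.
set L := 1 - proj_coef *m 'e_ord0.
have PE : project_out_row0 = L *m J by rewrite mulmxBl mul1mx -mulmxA -rowE.
have trigL : is_trig_mx L.
  apply/is_trig_mxP => i j lt_ij.
  have j0 : j != ord0 by rewrite -val_eqE -lt0n (leq_ltn_trans _ lt_ij).
  have ij : (i == j) = false by rewrite -val_eqE ltn_eqF.
  by rewrite !mxE big_ord1 !mxE (negbTE j0) ij andbF mulr0 subr0.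
have detL : \det L = 1.
  rewrite det_trig // big1 // => i _; rewrite !mxE big_ord1 !mxE eqxx.
  by case: (eqVneq i ord0) => [->|_]; rewrite ?proj_coef0 ?mul0r ?mulr0 subr0.
by rewrite PE trmx_mul !mulmxA -(mulmxA L) !det_mulmx det_tr detL mul1r mulr1.
Qed.

Lemma gram_project_out_row0_first_row j : j != ord0 ->
  (project_out_row0 *m project_out_row0^T) ord0 j = 0.
Proof.
move=> j0; rewrite gram_mxE.
under eq_bigr do rewrite project_out_row0_first project_out_row0E mulrBr.
rewrite sumrB proj_coefE //.
have -> : \sum_l J ord0 l * J j l = (J *m J^T) j ord0.
  by rewrite gram_mxE; apply: eq_bigr => l _; rewrite mulrC.
have -> : \sum_l J ord0 l * ((J *m J^T) j ord0 / (J *m J^T) ord0 ord0 * J ord0 l)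
    = (J *m J^T) j ord0 / (J *m J^T) ord0 ord0 * (J *m J^T) ord0 ord0.
  by rewrite gram_diagE mulr_sumr; apply: eq_bigr => l _; rewrite mulrCA expr2.
have [a0|a0] := eqVneq ((J *m J^T) ord0 ord0) 0; last by rewrite divfK ?subrr.
have J0 := sum_sqr_eq0 (etrans (esym (gram_diagE _ _)) a0).
by rewrite a0 mulr0 subr0 gram_mxE big1 // => l _; rewrite J0 mulr0.
Qed.

Lemma gram_project_out_row0_diag_le i :
  (row' ord0 project_out_row0 *m (row' ord0 project_out_row0)^T) i i
  <= (J *m J^T) (lift ord0 i) (lift ord0 i).
Proof.
have lift0 : lift ord0 i != ord0 by rewrite eq_sym neq_lift.
rewrite !gram_diagE; under eq_bigr do rewrite mxE project_out_row0E proj_coefE //.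
rewrite gram_diagE gram_mxE.
exact: sum_sqr_residual_le.
Qed.

End ProjectOutFirstRow.

Lemma det_gram_le_prod_diag m k (J : 'M[R]_(m, k)) :
  \det (J *m J^T) <= \prod_i (J *m J^T) i i.
Proof.
elim: m J => [|m IH] J; first by rewrite det_mx00 big_ord0.
set K := project_out_row0 J.
rewrite -det_gram_project_out_row0 det_first_row_diag; last first.
  exact: gram_project_out_row0_first_row.
rewrite row'_col'_gram big_ord_recl.
have -> : (K *m K^T) ord0 ord0 = (J *m J^T) ord0 ord0.
  by rewrite !gram_mxE; apply: eq_bigr => l _; rewrite project_out_row0_first.
apply: ler_wpM2l; first exact: gram_diag_ge0.
apply: le_trans (IH _) _; apply: ler_prod => i _.
by rewrite gram_diag_ge0 gram_project_out_row0_diag_le.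
Qed.

End GramDeterminant.

Section SquareRoots.
Variable R : rcfType.

Lemma sqrtrX (x : R) k : 0 <= x -> Num.sqrt (x ^+ k) = Num.sqrt x ^+ k.
Proof.
by move=> x0; rewrite -{1}(sqr_sqrtr x0) -exprM mulnC exprM sqrtr_sqr ger0_norm.
Qed.

Lemma cauchy_schwarz_sum_sqrt (I : finType) (x y : I -> R) :
  \sum_i x i * y i <= Num.sqrt (\sum_i x i ^+ 2) * Num.sqrt (\sum_i y i ^+ 2).
Proof.
rewrite -sqrtrM ?sum_sqr_ge0 //; apply: le_trans (ler_norm _) _.
by rewrite -sqrtr_sqr ler_sqrt ?mulr_ge0 ?sum_sqr_ge0 ?cauchy_schwarz_sum.
Qed.

End SquareRoots.

Section Norms.
Variable R : realType.
Implicit Types (m k : nat).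

Lemma frob_sqr m k (A : 'M[R]_(m, k)) : p1_frob A ^+ 2 = \sum_i \sum_j A i j ^+ 2.
Proof. by rewrite sqr_sqrtr // sumr_ge0 // => i _; rewrite sum_sqr_ge0. Qed.

Lemma vnormE k (v : 'cV[R]_k) : p1_vnorm v = Num.sqrt (\sum_i v i 0 ^+ 2).
Proof. by rewrite /p1_vnorm /p1_frob; under eq_bigr do rewrite big_ord1. Qed.

Lemma vnorm_sqr k (v : 'cV[R]_k) : p1_vnorm v ^+ 2 = \sum_i v i 0 ^+ 2.
Proof. by rewrite vnormE sqr_sqrtr ?sum_sqr_ge0. Qed.

Lemma frob_ge0 m k (A : 'M[R]_(m, k)) : 0 <= p1_frob A.
Proof. exact: sqrtr_ge0. Qed.

Lemma vnorm_ge0 k (v : 'cV[R]_k) : 0 <= p1_vnorm v.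
Proof. exact: frob_ge0. Qed.

Lemma vnorm0 k : p1_vnorm (0 : 'cV[R]_k) = 0.
Proof. by rewrite vnormE big1 ?sqrtr0 // => i _; rewrite mxE expr0n. Qed.

Lemma vnorm_gt0 k (v : 'cV[R]_k) : v != 0 -> 0 < p1_vnorm v.
Proof.
move=> v0; rewrite vnormE sqrtr_gt0 lt_def sum_sqr_ge0 andbT.
apply: contra v0 => /eqP /sum_sqr_eq0 v0.
by apply/eqP/matrixP => i j; rewrite ord1 v0 mxE.
Qed.

Lemma vnormZ k (a : R) (v : 'cV[R]_k) : p1_vnorm (a *: v) = `|a| * p1_vnorm v.
Proof.
rewrite !vnormE -sqrtr_sqr -sqrtrM ?sqr_ge0 // mulr_sumr.
by under eq_bigr do rewrite mxE exprMn.
Qed.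

Lemma dvol_le_frob N M (J : 'M[R]_(N, M)) :
  p1_dvol J <= Num.sqrt (N%:R : R) ^- N * p1_frob J ^+ N.
Proof.
have frob_trace : \sum_i (J *m J^T) i i = p1_frob J ^+ 2.
  by rewrite frob_sqr; apply: eq_bigr => i _; rewrite gram_diagE.
have AGM : \prod_i (J *m J^T) i i <= (p1_frob J ^+ 2 / N%:R) ^+ N.
  have := (@leif_AGM R _ predT (fun i => (J *m J^T) i i) _).1.
  by rewrite card_ord frob_trace; apply => i _; exact: gram_diag_ge0.
have -> : Num.sqrt (N%:R : R) ^- N * p1_frob J ^+ N
    = Num.sqrt ((p1_frob J ^+ 2 / N%:R) ^+ N).
  rewrite sqrtrX ?divr_ge0 ?sqr_ge0 // sqrtrM ?sqr_ge0 // sqrtrV //.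
  by rewrite sqrtr_sqr ger0_norm ?frob_ge0 // exprMn exprVn mulrC.
by rewrite ler_sqrt ?exprn_ge0 ?divr_ge0 ?sqr_ge0 // (le_trans (det_gram_le_prod_diag J)).
Qed.

Lemma vnorm_mulmx_le_frob d M (W : 'M[R]_(d, M)) (u : 'cV[R]_M) :
  p1_vnorm (W *m u) <= p1_frob W * p1_vnorm u.
Proof.
rewrite !vnormE /p1_frob -sqrtrM; last by rewrite sumr_ge0 // => i _; rewrite sum_sqr_ge0.
rewrite ler_sqrt; last by rewrite mulr_ge0 ?sum_sqr_ge0 // sumr_ge0 // => i _; rewrite sum_sqr_ge0.
rewrite mulr_suml; apply: ler_sum => i _; rewrite mxE.
exact: (cauchy_schwarz_sum (fun j => W i j) (fun j => u j 0)).
Qed.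

Local Open Scope classical_set_scope.

Lemma vnorm_mulmx_unit_le_spec d M (W : 'M[R]_(d, M)) v : p1_vnorm v = 1 ->
  p1_vnorm (W *m v) <= p1_spec_norm W.
Proof.
move=> v1; apply: sup_upper_bound; last by exists v.
split; first by exists (p1_vnorm (W *m v)); exists v.
exists (p1_frob W) => _ [u u1 <-].
by rewrite -[leRHS]mulr1 -u1 vnorm_mulmx_le_frob.
Qed.

Lemma spec_norm_ge0 d M (W : 'M[R]_(d, M)) : 0 <= p1_spec_norm W.
Proof.
have [[v v1]|nv] := pselect (exists v : 'cV[R]_M, p1_vnorm v = 1).
  exact: le_trans (vnorm_ge0 _) (vnorm_mulmx_unit_le_spec W v1).
rewrite /p1_spec_norm (_ : [set _ | _ in _] = set0) ?sup0 //.
by apply/seteqP; split => x //= [v v1 _]; apply: nv; exists v.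
Qed.

Lemma vnorm_mulmx_le_spec d M (W : 'M[R]_(d, M)) v :
  p1_vnorm (W *m v) <= p1_spec_norm W * p1_vnorm v.
Proof.
have [->|v0] := eqVneq v 0; first by rewrite mulmx0 !vnorm0 mulr0.
have vpos := vnorm_gt0 v0.
have := vnorm_mulmx_unit_le_spec W (v := (p1_vnorm v)^-1 *: v).
rewrite -scalemxAr !vnormZ ger0_norm ?invr_ge0 ?vnorm_ge0 // mulVf ?gt_eqF //.
by move=> /(_ erefl); rewrite mulrC ler_pdivrMr.
Qed.

Lemma vnorm_trmx_mulmx_le_spec d M (W : 'M[R]_(d, M)) u :
  p1_vnorm (W^T *m u) <= p1_spec_norm W * p1_vnorm u.
Proof.
set w := W^T *m u.
have [w0|w0] := eqVneq (p1_vnorm w) 0; first by rewrite w0 mulr_ge0 ?spec_norm_ge0 ?vnorm_ge0.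
have wpos : 0 < p1_vnorm w by rewrite lt_def w0 vnorm_ge0.
have adj : p1_vnorm w ^+ 2 = \sum_i u i 0 * (W *m w) i 0.
  rewrite vnorm_sqr.
  transitivity (\sum_l \sum_i w l 0 * (W i l * u i 0)).
    by apply: eq_bigr => l _; rewrite expr2 {2}/w !mxE mulr_sumr; under eq_bigr do rewrite mxE.
  rewrite exchange_big; apply: eq_bigr => i _; rewrite mxE mulr_sumr.
  by apply: eq_bigr => l _; ring.
rewrite -(ler_pM2r wpos) -expr2 adj.
apply: le_trans (cauchy_schwarz_sum_sqrt _ _) _.
rewrite -!vnormE mulrC mulrAC.
by apply: ler_wpM2r; [exact: vnorm_ge0 | exact: vnorm_mulmx_le_spec].
Qed.

Lemma frob_mulmx_le_spec N d M (A : 'M[R]_(N, d)) (B : 'M[R]_(d, M)) :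
  p1_frob (A *m B) <= p1_spec_norm B * p1_frob A.
Proof.
rewrite -(ler_pXn2r (n := 2)) ?nnegrE ?frob_ge0 ?mulr_ge0 ?spec_norm_ge0 ?frob_ge0 //.
rewrite exprMn !frob_sqr mulr_sumr; apply: ler_sum => r _.
pose a : 'cV[R]_d := (row r A)^T.
have rowE j : (A *m B) r j = (B^T *m a) j 0.
  by rewrite !mxE; apply: eq_bigr => l _; rewrite !mxE mulrC.
have aE l : A r l = a l 0 by rewrite !mxE.
under eq_bigr do rewrite rowE; under [X in _ * X]eq_bigr do rewrite aE.
rewrite -!vnorm_sqr -exprMn ler_pXn2r ?nnegrE ?vnorm_ge0 ?mulr_ge0 ?spec_norm_ge0 ?vnorm_ge0 //.
exact: vnorm_trmx_mulmx_le_spec.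
Qed.

End Norms.

Lemma delta_mx_mulmx (R : comPzRingType) m k (x : 'cV[R]_k) (a : 'I_m) b :
  delta_mx a b *m x = x b 0 *: delta_mx a 0.
Proof.
apply/matrixP => i j; rewrite ord1 !mxE (bigD1 b) //= big1 => [|l /negbTE lb].
  by rewrite !mxE eqxx andbT addr0 mulrC.
by rewrite mxE lb andbF mul0r.
Qed.

Section Jacobians.
Variable R : realType.

Lemma derive_jacobian N d (G : 'cV[R]_d -> 'cV[R]_N) z w :
  differentiable G z -> 'D_w G z = p1_jacobian G z *m w.
Proof.
move=> dG; apply/matrixP => r c; rewrite ord1 deriveE //.
rewrite {1}(matrix_sum_delta w) linear_sum summxE mxE.
apply: eq_bigr => a _; rewrite big_ord1 linearZ /= mxE -deriveE //.
by rewrite mxE mulrC.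
Qed.

Lemma derive_comp_mulmx N d M (G : 'cV[R]_d -> 'cV[R]_N) (W : 'M[R]_(d, M)) x v :
  'D_v (fun x => G (W *m x)) x = 'D_(W *m v) G (W *m x).
Proof.
rewrite /derive; f_equal; f_equal; apply/funext => h /=.
by rewrite mulmxDr scalemxAr.
Qed.

Lemma jacobian_comp_mulmx N d M (G : 'cV[R]_d -> 'cV[R]_N) (W : 'M[R]_(d, M)) x :
  differentiable G (W *m x) ->
  p1_jacobian (fun x => G (W *m x)) x = p1_jacobian G (W *m x) *m W.
Proof.
move=> dG; apply/matrixP => r j.
by rewrite mxE derive_comp_mulmx derive_jacobian // mulmxA -colE mxE.
Qed.

Lemma derive_netf_weight N d M P (g : 'cV[R]_d -> 'cV[R]_P -> 'cV[R]_N)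
    x (W E : 'M[R]_(d, M)) thb :
  'D_((E, 0) : 'M[R]_(d, M) * 'cV[R]_P) (p1_netf g x) (W, thb)
  = 'D_(E *m x) (g^~ thb) (W *m x).
Proof.
rewrite /derive; f_equal; f_equal; apply/funext => h /=.
by rewrite /p1_netf /= scaler0 add0r mulmxDl scalemxAl.
Qed.

Lemma frob_jacobian_netf_le N d M P (g : 'cV[R]_d -> 'cV[R]_P -> 'cV[R]_N)
    (W : 'M[R]_(d, M)) thb x :
  differentiable (g^~ thb) (W *m x) ->
  p1_frob (p1_jacobian (fun x => p1_netf g x (W, thb)) x)
  <= p1_spec_norm W * p1_frob (p1_jacobian (g^~ thb) (W *m x)).
Proof.
move=> dg; have -> : p1_jacobian (fun x => p1_netf g x (W, thb)) x
    = p1_jacobian (g^~ thb) (W *m x) *m W by exact: jacobian_comp_mulmx.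
exact: frob_mulmx_le_spec.
Qed.

End Jacobians.

Section DotDerivative.
Variables (R : realType) (V : normedModType R).

Lemma is_derive_mx_entry a b (F : V -> 'M[R]_(a, b)) q e r c :
  derivable F q e -> is_derive q e (fun q => F q r c) ('D_e F q r c).
Proof.
move=> dF; apply: DeriveDef; first exact: (derivable_mxP F q e).1.
by rewrite derive_mx // mxE.
Qed.

Lemma is_derive_sum_dot n N (F G : 'I_n -> V -> 'cV[R]_N) (c : R) q e :
  (forall i, derivable (F i) q e) -> (forall i, derivable (G i) q e) ->
  is_derive q e (fun q => c * \sum_i \sum_r F i q r 0 * G i q r 0)
    (c * \sum_i \sum_r (F i q r 0 * 'D_e (G i) q r 0 + G i q r 0 * 'D_e (F i) q r 0)).
Proof.
move=> dF dG.
have -> : (fun q => c * \sum_i \sum_r F i q r 0 * G i q r 0) =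
    c \*: \sum_i \sum_r ((fun q => F i q r 0) * (fun q => G i q r 0)).
  apply/funext => q' /=; rewrite fct_sumE; congr (_ * _).
  by apply: eq_bigr => i _; rewrite fct_sumE.
apply: is_deriveZ; apply: is_derive_sum => i; apply: is_derive_sum => r.
by apply: is_deriveM; exact: is_derive_mx_entry.
Qed.

End DotDerivative.

Section GaussNewton.
Variables (R : realType) (M N d P n : nat).
Variables (g : 'cV[R]_d -> 'cV[R]_P -> 'cV[R]_N)
  (xs : 'I_n -> 'cV[R]_M) (ys : 'I_n -> 'cV[R]_N).
Hypothesis netf_diff : forall (x : 'cV[R]_M) (p : 'M[R]_(d, M) * 'cV[R]_P),
  differentiable (p1_netf g x) p.
Hypothesis netf_derive_diff : forall (x : 'cV[R]_M) (v p : 'M[R]_(d, M) * 'cV[R]_P),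
  differentiable (fun q => derive (p1_netf g x) q v) p.

Let f i := p1_netf g (xs i).
Let residual i := f i - cst (ys i).

Lemma p1_lossE : p1_loss g xs ys =
  fun q => n%:R^-1 / 2 * \sum_i \sum_r residual i q r 0 * residual i q r 0.
Proof.
apply/funext => q; rewrite /p1_loss -mulrA; congr (_ * _).
rewrite mulr_sumr; apply: eq_bigr => i _; rewrite vnorm_sqr.
by congr (_ * _); apply: eq_bigr => r _; rewrite expr2.
Qed.

Lemma residualE i q : residual i q = f i q - ys i.
Proof. by []. Qed.

Lemma is_derive_residual i q e : is_derive q e (residual i) ('D_e (f i) q).
Proof.
have df : derivable (f i) q e by exact: diff_derivable (netf_diff _ _).
by rewrite -[X in is_derive _ _ _ X]subr0; exact: is_deriveB (derivableP df) (is_derive_cst _ _ _).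
Qed.

Lemma derive_loss e : (fun q => 'D_e (p1_loss g xs ys) q) =
  fun q => n%:R^-1 * \sum_i \sum_r residual i q r 0 * 'D_e (f i) q r 0.
Proof.
apply/funext => q; rewrite p1_lossE.
have dres i : derivable (residual i) q e by case: (is_derive_residual i q e).
rewrite (derive_val (is_derive := is_derive_sum_dot _ dres dres)).
rewrite -mulrA; congr (_ * _); rewrite mulr_sumr; apply: eq_bigr => i _.
rewrite mulr_sumr; apply: eq_bigr => r _; rewrite (derive_val (is_derive := is_derive_residual _ _ _)).
by field.
Qed.

(* At an interpolating point the residuals vanish, so only the Gauss-Newton
   term of the Hessian survives. *)
Lemma d2_loss_interpolating p e : (forall i, f i p = ys i) ->
  p1_d2 (p1_loss g xs ys) p e = n%:R^-1 * \sum_i \sum_r 'D_e (f i) p r 0 ^+ 2.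
Proof.
move=> interp; rewrite /p1_d2 derive_loss.
have dDf i : derivable (fun q => 'D_e (f i) q) p e.
  exact: diff_derivable (netf_derive_diff _ _ _).
have dres i : derivable (residual i) p e by case: (is_derive_residual i p e).
rewrite (derive_val (is_derive := is_derive_sum_dot _ dres dDf)).
congr (_ * _); apply: eq_bigr => i _; apply: eq_bigr => r _.
by rewrite residualE interp subrr mxE mul0r add0r (derive_val (is_derive := is_derive_residual _ _ _)) expr2.
Qed.

Lemma d2_loss_interpolating_ge0 p e : (forall i, f i p = ys i) ->
  0 <= p1_d2 (p1_loss g xs ys) p e.
Proof.
move=> /d2_loss_interpolating ->; rewrite mulr_ge0 ?invr_ge0 ?ler0n //.
by rewrite sumr_ge0 // => i _; rewrite sum_sqr_ge0.
Qed.

Hypothesis g_diff : forall (th : 'cV[R]_P) (z : 'cV[R]_d),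
  differentiable (fun z' => g z' th) z.
Variables (W : 'M[R]_(d, M)) (thb : 'cV[R]_P).

Lemma derive_netf_delta x a b r :
  'D_((delta_mx a b, 0) : 'M[R]_(d, M) * 'cV[R]_P) (p1_netf g x) (W, thb) r 0
  = x b 0 * p1_jacobian (g^~ thb) (W *m x) r a.
Proof.
rewrite derive_netf_weight delta_mx_mulmx derive_jacobian // -scalemxAr mxE.
by rewrite -colE mxE.
Qed.

Hypothesis interp : forall i, f i (W, thb) = ys i.

Let J i := p1_jacobian (g^~ thb) (W *m xs i).

Lemma d2_loss_weight a b :
  p1_d2 (p1_loss g xs ys) (W, thb) (delta_mx a b, 0)
  = n%:R^-1 * \sum_i \sum_r (xs i b 0 * J i r a) ^+ 2.
Proof.
rewrite d2_loss_interpolating //; congr (_ * _).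
by apply: eq_bigr => i _; apply: eq_bigr => r _; rewrite derive_netf_delta.
Qed.

Lemma sum_d2_loss_weight :
  \sum_a \sum_b p1_d2 (p1_loss g xs ys) (W, thb) (delta_mx a b, 0)
  = n%:R^-1 * \sum_i p1_vnorm (xs i) ^+ 2 * p1_frob (J i) ^+ 2.
Proof.
under eq_bigr do under eq_bigr do rewrite d2_loss_weight.
under eq_bigr do rewrite -mulr_sumr exchange_big /=.
rewrite -mulr_sumr exchange_big; congr (_ * _); apply: eq_bigr => i _.
rewrite vnorm_sqr frob_sqr [in RHS]exchange_big mulr_sumr; apply: eq_bigr => a _.
rewrite mulr_suml; apply: eq_bigr => b _.
by rewrite mulr_sumr; apply: eq_bigr => r _; rewrite exprMn.
Qed.

Lemma sharpness_ge_interpolating :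
  \sum_i p1_vnorm (xs i) ^+ 2 * p1_frob (J i) ^+ 2
  <= n%:R * p1_sharpness g xs ys (W, thb).
Proof.
rewrite /p1_sharpness sum_d2_loss_weight mulrDr mulrA.
have thb_ge0 : 0 <= \sum_k p1_d2 (p1_loss g xs ys) (W, thb) (0, delta_mx k 0).
  by rewrite sumr_ge0 // => k _; exact: d2_loss_interpolating_ge0.
have [n0|npos] := posnP n.
  have -> : \sum_i p1_vnorm (xs i) ^+ 2 * p1_frob (J i) ^+ 2 = 0.
    by apply: big1 => i _; move: (ltn_ord i); rewrite [X in (_ < X)%N -> _]n0.
  by rewrite mulr0 add0r mulr_ge0 ?ler0n.
by rewrite mulfV ?pnatr_eq0 -?lt0n // mul1r lerDl mulr_ge0 ?ler0n.
Qed.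

End GaussNewton.

Lemma sum_exprn_le_cauchy_schwarz (R : rcfType) (I : finType) (F b c : I -> R) k S :
  (0 < k)%N -> (forall i, 0 <= F i <= b i * c i) -> (forall i, 0 <= c i) ->
  \sum_i c i ^+ 2 <= S ->
  \sum_i F i ^+ k <= Num.sqrt (\sum_i b i ^+ (2 * k)) * Num.sqrt S ^+ k.
Proof.
case: k => // k _ Fbc c0 cS; have S0 := le_trans (sum_sqr_ge0 c) cS.
have Fk : \sum_i F i ^+ k.+1 <= \sum_i b i ^+ k.+1 * c i ^+ k.+1.
  apply: ler_sum => i _; have /andP[F0 Fle] := Fbc i.
  by rewrite -exprMn lerXn2r ?nnegrE // (le_trans F0).
apply: (le_trans Fk); apply: le_trans (cauchy_schwarz_sum_sqrt _ _) _.
under eq_bigr do rewrite -exprM mulnC; apply: ler_wpM2l; first exact: sqrtr_ge0.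
under eq_bigr do rewrite -exprM mulnC exprM.
rewrite -sqrtrX // ler_sqrt ?exprn_ge0 //.
apply: le_trans (sum_exprSn_le _ _) _ => [i|]; first exact: sqr_ge0.
by rewrite lerXn2r ?nnegrE ?sum_sqr_ge0.
Qed.

Lemma normalized_sum_exprn_le (R : rcfType) n N (F b c : 'I_n -> R) S :
  (0 < N)%N -> (forall i, 0 <= F i <= b i * c i) -> (forall i, 0 <= c i) ->
  \sum_i c i ^+ 2 <= n%:R * S ->
  Num.sqrt (N%:R : R) ^- N / n%:R * \sum_i F i ^+ N
  <= n%:R^-1 * Num.sqrt (\sum_i b i ^+ (2 * N)) * Num.sqrt (n%:R * S / N%:R) ^+ N.
Proof.
move=> N0 Fbc c0 cS; have nS0 := le_trans (sum_sqr_ge0 c) cS.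
rewrite sqrtrM // sqrtrV ?ler0n // exprMn exprVn.
set B := Num.sqrt (\sum_i _); set C := Num.sqrt (N%:R : R) ^- N.
have -> : n%:R^-1 * B * (Num.sqrt (n%:R * S) ^+ N * C)
    = C / n%:R * (B * Num.sqrt (n%:R * S) ^+ N) by ring.
rewrite ler_wpM2l ?divr_ge0 ?invr_ge0 ?exprn_ge0 ?sqrtr_ge0 ?ler0n //.
exact: sum_exprn_le_cauchy_schwarz.
Qed.

Theorem proposition1 (R : realType) (M N d P n : nat)
  (g : 'cV[R]_d -> 'cV[R]_P -> 'cV[R]_N)
  (xs : 'I_n -> 'cV[R]_M) (ys : 'I_n -> 'cV[R]_N)
  (W : 'M[R]_(d, M)) (thb : 'cV[R]_P) :
  (0 < N)%N ->
  (* g differentiable in its first argument *)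
  (forall (th : 'cV[R]_P) (z : 'cV[R]_d), differentiable (fun z' => g z' th) z) ->
  (* f twice differentiable in the parameters theta = (W, thb) *)
  (forall (x : 'cV[R]_M) (p : 'M[R]_(d, M) * 'cV[R]_P),
      differentiable (p1_netf g x) p) ->
  (forall (x : 'cV[R]_M) (v p : 'M[R]_(d, M) * 'cV[R]_P),
      differentiable (fun q => derive (p1_netf g x) q v) p) ->
  (forall i, xs i != 0) ->
  (* exact interpolation at theta* = (W, thb) *)
  (forall i, p1_netf g (xs i) (W, thb) = ys i) ->
  p1_LVR g W thb xs
    <= (Num.sqrt (N%:R : R)) ^- N / n%:R *
       \sum_(i < n) p1_frob (p1_jacobian (fun x : 'cV[R]_M => p1_netf g x (W, thb)) (xs i)) ^+ N
  /\
  (Num.sqrt (N%:R : R)) ^- N / n%:R *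
       \sum_(i < n) p1_frob (p1_jacobian (fun x : 'cV[R]_M => p1_netf g x (W, thb)) (xs i)) ^+ N
    <= n%:R^-1 *
       Num.sqrt (\sum_(i < n) p1_spec_norm W ^+ (2 * N) / p1_vnorm (xs i) ^+ (2 * N)) *
       Num.sqrt (n%:R * p1_sharpness g xs ys (W, thb) / N%:R) ^+ N.
Proof.
move=> N0 g_diff netf_diff netf_derive_diff xs0 interp.
pose Jf i := p1_jacobian (fun x : 'cV[R]_M => p1_netf g x (W, thb)) (xs i).
pose Jg i := p1_jacobian (fun z => g z thb) (W *m xs i).
split.
  rewrite /p1_LVR mulrAC [leLHS]mulrC ler_wpM2r ?invr_ge0 ?ler0n // mulr_sumr.
  by apply: ler_sum => i _; exact: dvol_le_frob.
have Jf_le i : 0 <= p1_frob (Jf i)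
    <= p1_spec_norm W / p1_vnorm (xs i) * (p1_vnorm (xs i) * p1_frob (Jg i)).
  by rewrite frob_ge0 mulrA divfK ?gt_eqF ?vnorm_gt0 // frob_jacobian_netf_le.
have sharp : \sum_i (p1_vnorm (xs i) * p1_frob (Jg i)) ^+ 2
    <= n%:R * p1_sharpness g xs ys (W, thb).
  under eq_bigr do rewrite exprMn.
  exact (sharpness_ge_interpolating netf_diff netf_derive_diff g_diff interp).
have -> : \sum_i p1_spec_norm W ^+ (2 * N) / p1_vnorm (xs i) ^+ (2 * N)
    = \sum_i (p1_spec_norm W / p1_vnorm (xs i)) ^+ (2 * N).
  by apply: eq_bigr => i _; rewrite expr_div_n.
apply: normalized_sum_exprn_le N0 Jf_le _ sharp => i.
by rewrite mulr_ge0 ?vnorm_ge0 ?frob_ge0.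
Qed.
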